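(* Let $X$ be a locally compact Hausdorff space and let $\mathcal{E}\to X$ be an (F) Banach bundle over $X$. If $\mathcal{E}$ is boundedly unitarizable, then it is $0$-boundedly unitarizable.
   Context: Fix a ground field $\mathbb{F}\in\{\mathbb{R},\mathbb{C}\}$. A Banach bundle over a topological space $X$ is a continuous open surjection $\pi:\mathcal{E}\to X$ together with a Banach-space structure on each fiber $\mathcal{E}_x=\pi^{-1}(x)$ such that scalar multiplication $\mathbb{F}\times\mathcal{E}\to\mathcal{E}$ and addition $\{(p,q)\in\mathcal{E}^2:\pi(p)=\pi(q)\}\to\mathcal{E}$ are continuous, the norm $\mathcal{E}\to\mathbb{R}_{\ge0}$ is continuous (an (F) bundle) or upper semicontinuous (an (H) bundle), and for every $x\in X$ the sets $\{p\in\mathcal{E}:\pi(p)\in U,\ \|p\|<\varepsilon\}$ ($U$ an open neighbourhood of $x$, $\varepsilon>0$) form a fundamental system of neighbourhoods of $0_x$ in $\mathcal{E}$. A Hilbert bundle is a Banach bundle all of whose fiber norms come from inner products. A section is a continuous $s:X\to\mathcal{E}$ with $\pi\circ s=\mathrm{id}$; $\Gamma_b(\mathcal{E})$ denotes the bounded sections with the supremum norm, and (for locally compact $X$) $\Gamma_0(\mathcal{E})$ the sections $s$ with $x\mapsto\|s(x)\|$ vanishing at infinity. A renorming of $\mathcal{E}$ into a Banach bundle $\mathcal{E}'\to X$ is a homeomorphism $\Phi:\mathcal{E}\to\mathcal{E}'$ with $\pi'\circ\Phi=\pi$ which is linear on each fiber; when $\mathcal{E}$ is (F), $\mathcal{E}'$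 is required to be (F) as well. $\mathcal{E}$ is boundedly unitarizable if there is a renorming $\Phi$ into a Hilbert bundle $\mathcal{E}'$ such that $s\mapsto\Phi\circ s$ maps $\Gamma_b(\mathcal{E})$ bijectively onto $\Gamma_b(\mathcal{E}')$ and is a topological isomorphism for the supremum norms. $\mathcal{E}$ is $0$-boundedly unitarizable if the same holds with $\Gamma_0$ in place of $\Gamma_b$. *)

From HB Require Import structures.
From mathcomp Require Import all_boot all_order all_algebra.
From mathcomp Require Import all_classical all_reals all_analysis.
From mathcomp Require Export complex.
Set Implicit Arguments. Unset Strict Implicit. Unset Printing Implicit Defensive.
Import Order.TTheory GRing.Theory Num.Theory.
Export numFieldTopology.Exports numFieldNormedType.Exports.
Local Open Scope classical_set_scope.
Local Open Scope ring_scope.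

(* The raw data of a Banach bundle pi : E -> X over the scalar field K:
   the projection, the zero of each fiber, fiberwise addition and scalar
   multiplication (only meaningful on fibers), and the norm.  Norms are
   real, but are stored in K (which is R or C) with 0 <= nrm p. *)
Record bundle_data (K : numFieldType) (X E : Type) := BundleData {
  bproj  : E -> X;
  bzero  : X -> E;
  badd   : E -> E -> E;
  bscale : K -> E -> E;
  bnorm  : E -> K }.

Section Bundles.
Variables (K : numFieldType) (X : topologicalType).

Section OneBundle.
Variables (E : topologicalType) (B : bundle_data K X E).
Local Notation pi := (bproj B).
Local Notation z := (bzero B).
Local Notation add := (badd B).
Local Notation scl := (bscale B).
Local Notation nrm := (bnorm B).
Local Notation sub p q := (add p (scl (-1) q)).

Definition fiber_vector_space (x : X) : Prop :=
  [/\ pi (z x) = x,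
      (forall p q, pi p = x -> pi q = x -> pi (add p q) = x),
      (forall a p, pi p = x -> pi (scl a p) = x),
      (forall p q r, pi p = x -> pi q = x -> pi r = x ->
         add p (add q r) = add (add p q) r /\ add p q = add q p) &
      (forall p, pi p = x -> add (z x) p = p /\
         exists2 q, pi q = x & add p q = z x)] /\
  (forall a b p q, pi p = x -> pi q = x ->
      [/\ scl 1 p = p, scl a (scl b p) = scl (a * b) p,
          scl (a + b) p = add (scl a p) (scl b p) &
          scl a (add p q) = add (scl a p) (scl a q)]).

Definition fiber_norm (x : X) : Prop :=
  forall a p q, pi p = x -> pi q = x ->
    [/\ 0 <= nrm p, (nrm p = 0 -> p = z x),
        nrm (scl a p) = `|a| * nrm p & nrm (add p q) <= nrm p + nrm q].

Definition fiber_complete (x : X) : Prop :=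
  forall u : nat -> E, (forall n, pi (u n) = x) ->
    (forall e : K, 0 < e -> exists N, forall m n, (N <= m)%N -> (N <= n)%N ->
        nrm (sub (u m) (u n)) < e) ->
    exists2 p, pi p = x &
      forall e : K, 0 < e -> exists N, forall n, (N <= n)%N -> nrm (sub (u n) p) < e.

Definition fibers_banach : Prop :=
  forall x, [/\ fiber_vector_space x, fiber_norm x & fiber_complete x].

(* topological axioms of a Banach bundle, with continuous norm ((F) bundle) *)
Definition F_bundle_topology : Prop :=
  [/\ continuous pi,
      (forall U : set E, open U -> open (pi @` U)),
      (forall x : X, exists p, pi p = x),
      continuous (fun ap : K * E => scl ap.1 ap.2) &
      {within [set pq : E * E | pi pq.1 = pi pq.2],
         continuous (fun pq : E * E => add pq.1 pq.2)}] /\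
  continuous nrm /\
  (forall x : X,
     (forall (U : set X) (e : K), open U -> U x -> 0 < e ->
        nbhs (z x) [set p | U (pi p) /\ nrm p < e]) /\
     (forall W : set E, nbhs (z x) W ->
        exists U : set X, exists2 e : K, [/\ open U, U x & 0 < e] &
          [set p | U (pi p) /\ nrm p < e] `<=` W)).

Definition F_banach_bundle : Prop := fibers_banach /\ F_bundle_topology.

(* complex (or real) conjugation: |k|^2 / k = conj k for K = R or C *)
Definition conjK (k : K) : K := `|k| ^+ 2 / k.

Definition hilbert_fibers : Prop :=
  forall x : X, exists ip : E -> E -> K,
    forall a p q r, pi p = x -> pi q = x -> pi r = x ->
      [/\ ip p p = nrm p ^+ 2,
          ip (add p q) r = ip p r + ip q r,
          ip (scl a p) r = a * ip p r &
          ip q p = conjK (ip p q)].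

Definition F_hilbert_bundle : Prop := F_banach_bundle /\ hilbert_fibers.

Definition is_section (s : X -> E) : Prop := continuous s /\ forall x, pi (s x) = x.

Definition Gamma_b (s : X -> E) : Prop :=
  is_section s /\ exists c : K, forall x, nrm (s x) <= c.

Definition Gamma_0 (s : X -> E) : Prop :=
  is_section s /\
  forall e : K, 0 < e -> exists C : set X, compact C /\
    forall x, ~ C x -> nrm (s x) < e.

End OneBundle.

Definition renorming (E E' : topologicalType) (B : bundle_data K X E)
  (B' : bundle_data K X E') (Phi : E -> E') : Prop :=
  [/\ continuous Phi,
      (exists2 Psi : E' -> E, continuous Psi & cancel Phi Psi /\ cancel Psi Phi),
      (forall p, bproj B' (Phi p) = bproj B p),
      (forall p q, bproj B p = bproj B q ->
         Phi (badd B p q) = badd B' (Phi p) (Phi q)) &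
      (forall a p, Phi (bscale B a p) = bscale B' a (Phi p))].

(* s |-> Phi \o s maps the section space G bijectively onto G' and is a
   topological isomorphism for the sup norms (bounded with bounded inverse) *)
Definition induced_iso (E E' : topologicalType) (B : bundle_data K X E)
  (B' : bundle_data K X E') (G : (X -> E) -> Prop) (G' : (X -> E') -> Prop)
  (Phi : E -> E') : Prop :=
  [/\ (forall s, G s -> G' (Phi \o s)),
      (forall s1 s2, G s1 -> G s2 -> Phi \o s1 = Phi \o s2 -> s1 = s2),
      (forall t, G' t -> exists2 s, G s & Phi \o s = t),
      (exists2 C : K, 0 <= C & forall s, G s -> forall c : K,
          (forall x, bnorm B (s x) <= c) ->
          forall x, bnorm B' (Phi (s x)) <= C * c) &
      (exists2 C : K, 0 <= C & forall s, G s -> forall c : K,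
          (forall x, bnorm B' (Phi (s x)) <= c) ->
          forall x, bnorm B (s x) <= C * c)].

Definition boundedly_unitarizable (E : topologicalType) (B : bundle_data K X E)
  : Prop :=
  exists (E' : topologicalType) (B' : bundle_data K X E') (Phi : E -> E'),
    [/\ F_hilbert_bundle B', renorming B B' Phi &
        induced_iso B B' (Gamma_b B) (Gamma_b B') Phi].

Definition zero_boundedly_unitarizable (E : topologicalType)
  (B : bundle_data K X E) : Prop :=
  exists (E' : topologicalType) (B' : bundle_data K X E') (Phi : E -> E'),
    [/\ F_hilbert_bundle B', renorming B B' Phi &
        induced_iso B B' (Gamma_0 B) (Gamma_0 B') Phi].

End Bundles.

From mathcomp Require Import all_boot all_order all_algebra.
From mathcomp Require Import all_classical all_reals all_analysis.
Import numFieldTopology.Exports numFieldNormedType.Exports.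
Local Open Scope classical_set_scope.
Import Order.TTheory GRing.Theory Num.Theory.
Set Implicit Arguments. Unset Strict Implicit. Unset Printing Implicit Defensive.

(* Let Phi be fiberwise linear with |Phi o u| <= C sup |u| for bounded sections u.
   Given a section s and e > 0, the damped section u = e / (e + |s|) * s is
   bounded by e, so |Phi (u x)| <= C e; undoing the damping fiberwise gives
   |Phi (s x)| <= (e + |s x|) C, which is < 2 e C wherever |s x| < e.  Hence
   Phi, and likewise its inverse, preserves vanishing at infinity, and the sup
   norm estimates on Gamma_0 are inherited from Gamma_b, which contains it. *)

Section BanachBundles.
Local Open Scope ring_scope.
Variables (K : numFieldType) (X : topologicalType).

Section FiberFacts.
Variables (E : topologicalType) (B : bundle_data K X E).
Hypothesis fbB : fibers_banach B.

Lemma bnorm_ge0 (p : E) : 0 <= bnorm B p.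
Proof. by have [_ hn _] := fbB (bproj B p); have [] := hn 1 p p erefl erefl. Qed.

Lemma bnormZ (a : K) (p : E) : bnorm B (bscale B a p) = `|a| * bnorm B p.
Proof. by have [_ hn _] := fbB (bproj B p); have [] := hn a p p erefl erefl. Qed.

Lemma bscaleA (a b : K) (p : E) : bscale B a (bscale B b p) = bscale B (a * b) p.
Proof. by have [[_ hv] _ _] := fbB (bproj B p); have [] := hv a b p p erefl erefl. Qed.

Lemma bscale1 (p : E) : bscale B 1 p = p.
Proof. by have [[_ hv] _ _] := fbB (bproj B p); have [] := hv 1 1 p p erefl erefl. Qed.

Lemma bproj_scale (a : K) (p : E) : bproj B (bscale B a p) = bproj B p.
Proof. by have [[[_ _ hp _ _] _] _ _] := fbB (bproj B p); exact: hp. Qed.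

End FiberFacts.

Definition vanishes_at_infinity (f : X -> K) : Prop :=
  forall e : K, 0 < e -> exists C : set X, compact C /\ forall x, ~ C x -> f x < e.

Definition sup_norm_bounded (E1 E2 : topologicalType) (B1 : bundle_data K X E1)
    (B2 : bundle_data K X E2) (G : (X -> E1) -> Prop) (Th : E1 -> E2) (C : K) :=
  forall s, G s -> forall c : K, (forall x, bnorm B1 (s x) <= c) ->
    forall x, bnorm B2 (Th (s x)) <= C * c.

Section Damping.
Variables (E : topologicalType) (B : bundle_data K X E).
Hypothesis FB : F_banach_bundle B.
Variables (e : K) (s : X -> E).
Hypothesis e_gt0 : 0 < e.

Let fbB : fibers_banach B := FB.1.

Definition damp (x : X) : E := bscale B (e / (e + bnorm B (s x))) (s x).

Lemma damp_den_gt0 (x : X) : 0 < e + bnorm B (s x).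
Proof. by rewrite ltr_pwDl // bnorm_ge0. Qed.

Lemma bnorm_damp_le (x : X) : bnorm B (damp x) <= e.
Proof.
have den_gt0 := damp_den_gt0 x.
rewrite /damp bnormZ // ger0_norm; last by rewrite divr_ge0 ?ltW.
rewrite mulrAC ler_pdivrMr // ler_pM2l //.
by rewrite lerDr ltW.
Qed.

Lemma damp_continuous : continuous s -> continuous damp.
Proof.
have [_ [[_ _ _ cscale _] [cnorm _]]] := FB.
move=> cs.
have cf : continuous (fun x => e / (e + bnorm B (s x))).
  move=> x; apply: cvgM; first exact: cvg_cst.
  apply: cvgV; first by rewrite gt_eqF ?damp_den_gt0.
  by apply: cvgD; [exact: cvg_cst | exact: continuous_comp (cs x) (cnorm _)].
move=> x; apply: (@continuous_comp X (K * E)%type E (fun x => (_, s x))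
  (fun ap : K * E => bscale B ap.1 ap.2)); last exact: cscale.
exact: cvg_pair (cf x) (cs x).
Qed.

Lemma damp_Gamma_b : is_section B s -> Gamma_b B damp.
Proof.
move=> [cs ps]; split; last by exists e; exact: bnorm_damp_le.
by split; [exact: damp_continuous | move=> x; rewrite bproj_scale].
Qed.

Lemma undamp (x : X) : s x = bscale B ((e + bnorm B (s x)) / e) (damp x).
Proof.
rewrite /damp bscaleA // mulrA divfK ?gt_eqF //.
by rewrite divff ?gt_eqF ?damp_den_gt0 // bscale1.
Qed.

End Damping.

Section VanishingTransfer.
Variables (E1 E2 : topologicalType) (B1 : bundle_data K X E1) (B2 : bundle_data K X E2).
Hypotheses (FB1 : F_banach_bundle B1) (fbB2 : fibers_banach B2).
Variables (Th : E1 -> E2) (C : K).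
Hypotheses (ThZ : forall a p, Th (bscale B1 a p) = bscale B2 a (Th p)) (C_ge0 : 0 <= C).
Hypothesis ThC : sup_norm_bounded B1 B2 (Gamma_b B1) Th C.

Lemma bnorm_comp_le (s : X -> E1) (e : K) : is_section B1 s -> 0 < e ->
  forall x, bnorm B2 (Th (s x)) <= (e + bnorm B1 (s x)) * C.
Proof.
move=> sec e_gt0 x.
have ratio_ge0 : 0 <= (e + bnorm B1 (s x)) / e.
  by rewrite divr_ge0 ?ltW ?(damp_den_gt0 FB1 s e_gt0 x).
have Thu := ThC (damp_Gamma_b FB1 e_gt0 sec) (bnorm_damp_le FB1 s e_gt0) x.
rewrite {1}(undamp FB1 s e_gt0 x) ThZ bnormZ // ger0_norm //.
apply: le_trans (ler_wpM2l ratio_ge0 Thu) _.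
by rewrite [C * e]mulrC mulrA divfK ?gt_eqF.
Qed.

Lemma comp_vanishes (s : X -> E1) : Gamma_0 B1 s ->
  vanishes_at_infinity (fun x => bnorm B2 (Th (s x))).
Proof.
move=> [sec s0] e0 e0_gt0.
have D_gt0 : 0 < C *+ 2 + 1 by rewrite ltr_wpDl // mulrn_wge0.
pose e := e0 / (C *+ 2 + 1).
have e_gt0 : 0 < e by rewrite divr_gt0.
have [Cs [cCs small]] := s0 e e_gt0.
exists Cs; split=> // x /small sx_lt.
apply: le_lt_trans (bnorm_comp_le sec e_gt0 x) _.
apply: (le_lt_trans (y := (e + e) * C)); first by rewrite ler_wpM2r // lerD2l ltW.
have -> : e0 = e * (C *+ 2 + 1) by rewrite divfK ?gt_eqF.
by rewrite -mulr2n mulrnAl -mulrnAr ltr_pM2l // ltrDl ltr01.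
Qed.

End VanishingTransfer.

Section Renormings.
Variables (E E' : topologicalType) (B : bundle_data K X E) (B' : bundle_data K X E').
Variable Phi : E -> E'.
Hypothesis ren : renorming B B' Phi.

Lemma renorming_sym :
  exists Psi, [/\ renorming B' B Psi, cancel Phi Psi & cancel Psi Phi].
Proof.
have [cPhi [Psi cPsi [PhiK PsiK]] projPhi addPhi scalePhi] := ren.
have projPsi q : bproj B (Psi q) = bproj B' q by rewrite -projPhi PsiK.
exists Psi; split=> //; split=> //; first by exists Phi.
- by move=> p q pq; apply: (can_inj PhiK); rewrite addPhi ?projPsi // !PsiK.
- by move=> a q; apply: (can_inj PhiK); rewrite scalePhi !PsiK.
Qed.

Lemma comp_is_section (s : X -> E) : is_section B s -> is_section B' (Phi \o s).
Proof.
have [cPhi _ projPhi _ _] := ren.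
move=> [cs ps]; split; last by move=> x /=; rewrite projPhi ps.
by move=> x; apply: continuous_comp (cs x) (cPhi _).
Qed.

Lemma comp_Gamma_b (s : X -> E) (c : K) : is_section B s ->
  (forall x, bnorm B' (Phi (s x)) <= c) -> Gamma_b B' (Phi \o s).
Proof. by move=> sec sc; split; [exact: comp_is_section | exists c]. Qed.

Lemma comp_Gamma_0 (C : K) : F_banach_bundle B -> fibers_banach B' -> 0 <= C ->
  sup_norm_bounded B B' (Gamma_b B) Phi C ->
  forall s, Gamma_0 B s -> Gamma_0 B' (Phi \o s).
Proof.
have [_ _ _ _ scalePhi] := ren.
move=> FB fbB' C_ge0 PhiC s s0; split; first exact: comp_is_section s0.1.
exact: (comp_vanishes FB fbB' scalePhi C_ge0 PhiC s0).
Qed.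

Lemma comp_inj (Psi : E' -> E) : cancel Phi Psi ->
  forall s1 s2 : X -> E, Phi \o s1 = Phi \o s2 -> s1 = s2.
Proof.
move=> PhiK s1 s2 eq12; apply/funext => x.
by rewrite -[s1 x]PhiK -[s2 x]PhiK; congr Psi; exact: (congr1 (fun g => g x) eq12).
Qed.

Lemma inverse_sup_norm_bounded (Psi : E' -> E) (C : K) : cancel Phi Psi ->
  (forall t, Gamma_b B' t -> exists2 s, Gamma_b B s & Phi \o s = t) ->
  (forall s, Gamma_b B s -> forall c : K, (forall x, bnorm B' (Phi (s x)) <= c) ->
     forall x, bnorm B (s x) <= C * c) ->
  sup_norm_bounded B' B (Gamma_b B') Psi C.
Proof.
move=> PhiK surj PsiC t /surj [s sb <-] c tc x /=.
by rewrite PhiK; apply: PsiC sb c tc x.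
Qed.

End Renormings.

Lemma zero_boundedly_unitarizable_of_bounded (E : topologicalType) (B : bundle_data K X E) :
  F_banach_bundle B -> boundedly_unitarizable B -> zero_boundedly_unitarizable B.
Proof.
move=> FB [E' [B' [Phi [hil ren [_ _ surj [C1 C1_ge0 PhiC] [C2 C2_ge0 PsiC]]]]]].
have FB' : F_banach_bundle B' := hil.1.
have [Psi [renPsi PhiK PsiK]] := renorming_sym ren.
have PsiC' := inverse_sup_norm_bounded PhiK surj PsiC.
exists E', B', Phi; split=> //; split.
- by move=> s s0; exact: (comp_Gamma_0 ren FB FB'.1 C1_ge0 PhiC s0).
- by move=> s1 s2 _ _; exact: (comp_inj PhiK).
- move=> t t0; exists (Psi \o t); last by apply/funext => x /=; rewrite PsiK.
  exact: (comp_Gamma_0 renPsi FB' FB.1 C2_ge0 PsiC' t0).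
- exists C1 => // s [sec _] c sc.
  by apply: (PhiC _ _ c sc); split=> //; exists c.
- exists C2 => // s [sec _] c sc x.
  have := PsiC' _ (comp_Gamma_b ren sec sc) c sc x.
  by rewrite /= PhiK.
Qed.

End BanachBundles.

Theorem lemma1p2 (R : realType) :
  (forall (X : topologicalType), hausdorff_space X -> locally_compact [set: X] ->
   forall (E : topologicalType) (B : bundle_data R X E),
     F_banach_bundle B -> boundedly_unitarizable B ->
     zero_boundedly_unitarizable B) /\
  (forall (X : topologicalType), hausdorff_space X -> locally_compact [set: X] ->
   forall (E : topologicalType) (B : bundle_data R[i] X E),
     F_banach_bundle B -> boundedly_unitarizable B ->
     zero_boundedly_unitarizable B).
Proof.
by split=> X _ _ E B; exact: zero_boundedly_unitarizable_of_bounded.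
Qed.
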